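(* For each $n\ge 0$ let $\mathbb{Z}_n$ be a $1$-Gray code for $\mathcal{Z}_n$ whose first word is $0(001)^\star$ and whose last word is $(001)^\star$. Define $\mathbb{W}^1_0$ as the list containing only the empty word, and for $n\ge1$, $\mathbb{W}^1_n=1\cdot\mathbb{W}^1_{n-1}\circ\mathbb{Z}_n$. Then for any $n\ge 1$, $\mathbb{W}^1_n$ is a $1$-Gray code for $\mathcal{W}^1_n$ whose first word is $1^n$ and whose last word is $(001)^\star$.
   Context: A binary word is $1$-decreasing if for every maximal run of $0$s, of length $a>0$, together with the (possibly empty) maximal run of $1$s immediately following it, of length $b$, one has $a>b$. $\mathcal{W}^1_n$ is the set of $1$-decreasing binary words of length $n$. For $n\ge1$, $\mathcal{Z}_n$ is the set of words in $\mathcal{W}^1_n$ starting with $0$; $\mathcal{Z}_0=\{\epsilon\}$. A $1$-Gray code for a set $\mathcal{A}$ of equal-length words is an ordered list of all elements of $\mathcal{A}$, each once, in which consecutive words differ in at most one position. For a list $\mathbb{L}$ and a word $w$, $w\cdot\mathbb{L}$ is the list obtained by prefixing $w$ to every word of $\mathbb{L}$; $\mathbb{L}_1\circ\mathbb{L}_2$ is the concatenation of lists. In a word of prescribed length $n$ written $u(001)^\star$, $(001)^\star$ denotes the prefix of $001001\cdots$ of the length needed to reach total length $n$. *)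

From mathcomp Require Import all_boot.
Set Implicit Arguments. Unset Strict Implicit. Unset Printing Implicit Defensive.

(* Binary words: seq bool, with false = 0 and true = 1. *)
Definition word := seq bool.

(* w is 1-decreasing: for every maximal run of 0s (length a > 0) together
   with the maximal (possibly empty) run of 1s immediately following it
   (length b), one has a > b.  A decomposition
   w = u ++ 0^a ++ 1^b ++ v is one of "maximal runs" when u is empty or
   ends with 1, v is empty or starts with 0, and (b > 0 or v is empty). *)
Definition one_decreasing (w : word) : Prop :=
  forall (u v : word) (a b : nat),
    w = u ++ nseq a false ++ nseq b true ++ v ->
    0 < a ->
    (u == [::]) || last false u ->
    (v == [::]) || ~~ head true v ->
    (0 < b) || (v == [::]) ->
    b < a.

Definition in_W1 (n : nat) (w : word) : Prop := size w = n /\ one_decreasing w.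

Definition in_Z (n : nat) (w : word) : Prop :=
  if n is 0 then w = [::] else in_W1 n w /\ head true w = false.

Definition hamming (x y : word) : nat :=
  count (fun p : bool * bool => p.1 != p.2) (zip x y).

Definition gray1 (A : word -> Prop) (L : seq word) : Prop :=
  [/\ uniq L, (forall w, w \in L <-> A w) &
      sorted (fun x y => hamming x y <= 1) L].

(* (001)^* truncated/extended to length n *)
Definition pat001 (n : nat) : word := mkseq (fun i => i %% 3 == 2) n.

Definition first_is (L : seq word) (w : word) : Prop :=
  L != [::] /\ head [::] L = w.
Definition last_is (L : seq word) (w : word) : Prop :=
  L != [::] /\ last [::] L = w.

Fixpoint Wlist (Z : nat -> seq word) (n : nat) : seq word :=
  if n is n'.+1 then map (cons true) (Wlist Z n') ++ Z n else [:: [::]].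

From mathcomp Require Import all_boot.

Set Implicit Arguments. Unset Strict Implicit. Unset Printing Implicit Defensive.

(* A 1-decreasing word of length n+1 either starts with 1, followed by an
   arbitrary 1-decreasing word of length n (a leading run of 1s follows no
   run of 0s and is unconstrained), or starts with 0, i.e. lies in Z_{n+1}.
   So 1.W_n o Z_{n+1} lists every word exactly once, and it is a Gray code
   because the junction words 1(001)^* and 0(001)^* differ only in their
   first bit. *)

Lemma one_decreasing_nil : one_decreasing [::].
Proof. by move=> [|x u] v [|a] b. Qed.

Lemma one_decreasing_cons1 w : one_decreasing (true :: w) <-> one_decreasing w.
Proof.
split=> [od u v a b Ew a_gt0 Hu Hv Hb | od [|x u] v a b Ew a_gt0 Hu Hv Hb].
- apply: (od (true :: u) v a b) => //; first by rewrite Ew.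
  by case: u {Ew} Hu.
- by case: a a_gt0 Ew.
- case: Ew Hu => <- Ew Hu; apply: (od u v a b Ew a_gt0 _ Hv Hb).
  by case: u {Ew} Hu.
Qed.

Lemma hamming_cons a b x y :
  hamming (a :: x) (b :: y) = (a != b) + hamming x y.
Proof. by []. Qed.

Lemma hamming_xx x : hamming x x = 0.
Proof. by elim: x => //= a x; rewrite /hamming /= eqxx. Qed.

Definition cons_set (b : bool) (A : word -> Prop) (w : word) : Prop :=
  if w is c :: w' then c = b /\ A w' else False.

Lemma gray1_ext A B L : (forall w, A w <-> B w) -> gray1 A L -> gray1 B L.
Proof.
by move=> AB [uL memL sL]; split=> // w; apply: iff_trans (memL w) (AB w).
Qed.

Lemma gray1_map_cons b A L :
  gray1 A L -> gray1 (cons_set b A) (map (cons b) L).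
Proof.
move=> [uL memL sL]; split.
- by rewrite map_inj_uniq // => x y [].
- move=> [|c w] /=; first by split=> //; case/mapP.
  split=> [/mapP [w' w'L [-> ->]] | [-> /memL wL]]; last exact: map_f.
  by split=> //; apply/memL.
- case: L sL {uL memL} => //= x s; elim: s x => //= y s IHs x /andP [xy sy].
  by rewrite hamming_cons eqxx xy IHs.
Qed.

Lemma gray1_cat A B L1 L2 :
  gray1 A L1 -> gray1 B L2 -> (forall w, A w -> B w -> False) ->
  L1 != [::] -> L2 != [::] -> hamming (last [::] L1) (head [::] L2) <= 1 ->
  gray1 (fun w => A w \/ B w) (L1 ++ L2).
Proof.
move=> [u1 mem1 s1] [u2 mem2 s2] AB_disj.
case: L1 => // x1 L1 in u1 mem1 s1 * => _.
case: L2 => // x2 L2 in u2 mem2 s2 * => _ junction; split.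
- rewrite cat_uniq u1 u2 andbT; apply/hasPn => w /mem2 Bw; apply/negP => /mem1 Aw.
  exact: AB_disj Aw Bw.
- by move=> w; rewrite mem_cat; split=> [/orP [/mem1|/mem2] | [/mem1|/mem2] ->];
    [left | right | | rewrite orbT].
- by rewrite /sorted /= cat_path; apply/and3P; split.
Qed.

Lemma first_is_cat L1 L2 w : first_is L1 w -> first_is (L1 ++ L2) w.
Proof. by case: L1 => [[]|]. Qed.

Lemma last_is_cat L1 L2 w : last_is L2 w -> last_is (L1 ++ L2) w.
Proof. by case: L2 => [[]|x L2 [_ <-]] //; split; rewrite ?last_cat; case: L1. Qed.

Lemma first_is_map_cons b L w : first_is L w -> first_is (map (cons b) L) (b :: w).
Proof. by case: L => [[]|x L [_ <-]]. Qed.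

Lemma last_is_map_cons b L w : last_is L w -> last_is (map (cons b) L) (b :: w).
Proof. by case: L => [[]|x L [_ <-]] //; rewrite /last_is /= last_map. Qed.

Lemma in_W1S n w : in_W1 n.+1 w <-> cons_set true (in_W1 n) w \/ in_Z n.+1 w.
Proof.
case: w => [|[] w]; rewrite /in_W1 /=.
- by split=> [[]|[|[[]]]].
- have [od_behead od_cons] := one_decreasing_cons1 w.
  split=> [[[->] /od_behead od] | [[_ [-> /od_cons od]] | [_ //]]]; first by left.
  by split.
- by split=> [W|[[]|[]]]; [right|..].
Qed.

Section WlistGray.

Variable Z : nat -> seq word.

Hypothesis Z_gray : forall n, 1 <= n ->
  [/\ gray1 (in_Z n) (Z n),
      first_is (Z n) (false :: pat001 n.-1) &
      last_is (Z n) (pat001 n)].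

Lemma Wlist_gray n :
  [/\ gray1 (in_W1 n) (Wlist Z n),
      first_is (Wlist Z n) (nseq n true) &
      last_is (Wlist Z n) (pat001 n)].
Proof.
elim: n => [|n [WG Wfirst Wlast]].
  split=> //; split=> // w; rewrite inE.
  by split=> [/eqP -> | [/size0nil ->]] //; split=> //; exact: one_decreasing_nil.
have [ZG Zfirst Zlast] := @Z_gray n.+1 isT.
have [W1_ne W1_last] := @last_is_map_cons true _ _ Wlast.
have [Z_ne Z_head] := Zfirst.
split=> /=; last 2 first.
- exact/first_is_cat/first_is_map_cons.
- exact: last_is_cat.
apply: gray1_ext (fun w => iff_sym (in_W1S n w)) _.
apply: gray1_cat (gray1_map_cons true WG) ZG _ W1_ne Z_ne _.
  by move=> [|b w] // [-> _] [_].
by rewrite W1_last Z_head hamming_cons hamming_xx.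
Qed.

End WlistGray.

Theorem theorem4 (Z : nat -> seq word) :
  (forall n, 1 <= n ->
     [/\ gray1 (in_Z n) (Z n),
         first_is (Z n) (false :: pat001 n.-1) &
         last_is (Z n) (pat001 n)]) ->
  forall n, 1 <= n ->
    [/\ gray1 (in_W1 n) (Wlist Z n),
        first_is (Wlist Z n) (nseq n true) &
        last_is (Wlist Z n) (pat001 n)].
Proof. by move=> Z_gray n _; exact: Wlist_gray. Qed.
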